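(* Under the standing assumptions below, if $F\in\mathcal N$ satisfies $\mathcal B(F)=F$, then $F(\gamma,x,s)\le D(\gamma,x,s)$ for all $\gamma\in\mathbb R^I_+$, $x\in\mathcal X$, $s\in\mathcal S$.
   Context: Setup. Let $\mathcal S$ be a finite set and $(s_t)_{t\ge0}$ a Markov chain on $\mathcal S$ with transition probabilities $\pi(s'|s)>0$ for all $s,s'\in\mathcal S$; for $s^t=(s_0,\dots,s_t)\in\mathcal S^{t+1}$ write $\pi^t(s^t|s_0)$ for its probability given $s_0$ and $\mathbb E_{s_t}$ for expectation over future shocks given $s^t$. Let $\mathcal A\subset\mathbb R^n$ be a finite set, $\mathcal X\subseteq\mathbb R^m$ a countable set, $\zeta:\mathcal X\times\mathcal A\times\mathcal S\to\mathcal X$, $p:\mathcal X\times\mathcal A\times\mathcal S\to\mathbb R$, $r,g^1,\dots,g^I$ bounded real functions on $\mathcal X\times\mathcal A\times\mathcal S$, $\bar g^i\in\mathbb R$, $\beta\in(0,1)$. A plan is $a=(a(s^t))_{t,s^t}$, $a(s^t)\in\mathcal A$, inducing $x(s^0)=x_0$, $x(s^{t+1})=\zeta(x(s^t),a(s^t),s_t)$. $\tilde{\mathcal A}(x,s)=\{a\in\mathcal A:p(x,a,s)\ge0\}$; $\tilde{\mathcal A}^\infty(x_0)$ is the set of plans with $a(s^t)\in\tilde{\mathcal A}(x(s^t),s_t)$ for all $t,s^t$. A plan is feasible for $(x_0,s_0)$ if it lies in $\tilde{\mathcal A}^\infty(x_0)$ and $\mathbb E_{s_t}\sum_{n\ge0}\beta^ng^i(x(s^{t+n}),a(s^{t+n}),s_{t+n})\ge\bar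 g^i$ for all $t,s^t,i$. Standing assumption: for every $(x_0,s_0)$ a feasible plan exists. Pre-action histories $h^t=(s_0,a_0,\dots,s_{t-1},a_{t-1},s_t)\in\mathcal H^t=\mathcal S^{t+1}\times\mathcal A^t$; a plan generates $h^t=(s_0,a(s^0),\dots,a(s^{t-1}),s_t)$ along $s^t$. Dual value: $\Lambda$ is the set of $(\lambda^i(h^t))_{t,h^t,i}$, $\lambda^i(h^t)\ge0$, $\sum_t\sum_{h^t}\sum_i\beta^t\lambda^i(h^t)\pi^t(s^t|s_0)<\infty$. $L(a,\lambda;\gamma,x_0,s_0)=\mathbb E_{s_0}\sum_t\beta^t\big[r(x(s^t),a(s^t),s_t)+\sum_i\gamma^ig^i(x(s^t),a(s^t),s_t)+\sum_i\lambda^i(h^t)(\sum_{n\ge0}\beta^ng^i(x(s^{t+n}),a(s^{t+n}),s_{t+n})-\bar g^i)\big]$ and $D(\gamma,x_0,s_0)=\inf_{\lambda\in\Lambda}\sup_{a\in\tilde{\mathcal A}^\infty(x_0)}L$. Function spaces. $L=(\|r\|_\infty+\sum_i\|g^i\|_\infty)/(1-\beta)$ (a constant, not to be confused with the Lagrangian), $B(k)=\{\gamma\in\mathbb R^I_+:\|\gamma\|_\infty\le k\}$, $\mathcal S=\{s_1,\dots,s_{|\mathcal S|}\}$, $\mathcal X=\{x_1,x_2,\dots\}$. $\mathcal M$: functions $F:\mathbb R^I_+\times\mathcal X\times\mathcal S\to\mathbb R$ with $F(\cdot,x,s)\in L^\infty(B(k))$ for all $k$ and $\|F\|_{\mathcal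 M}=\sum_i2^{-i}\sum_j2^{-j}\sum_{k\ge1}2^{-k}\|F(\cdot,x_j,s_i)\|_{L^\infty(B(k))}<\infty$. $\mathcal N$: those $F\in\mathcal M$ with, for all $x,s$, (i) $F(\cdot,x,s)$ convex; (ii) $|F(\gamma_1,x,s)-F(\gamma_2,x,s)|\le L\|\gamma_1-\gamma_2\|_1$; (iii) $F(\gamma,x,s)\ge v^0+\sum_i\gamma^iv^i$ for every feasible plan for $(x,s)$, $v^0=\mathbb E_s\sum_t\beta^tr(\cdot)$, $v^i=\mathbb E_s\sum_t\beta^tg^i(\cdot)$; (iv) $F(\gamma,x,s)\le(1+\sum_i\gamma^i)L$. Bellman operator: $\mathcal B(F)(\gamma,x,s)=\inf_{\lambda\in\mathbb R^I_+}\sup_{a\in\tilde{\mathcal A}(x,s)}\big[r(x,a,s)+\sum_i(\gamma^ig^i(x,a,s)+\lambda^i(g^i(x,a,s)-\bar g^i))+\beta\mathbb E_sF(\gamma+\lambda,\zeta(x,a,s),s')\big]$, $s'\sim\pi(\cdot|s)$. *)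

From mathcomp Require Import all_boot all_order all_algebra.
From mathcomp Require Import all_classical all_reals all_analysis.
Import numFieldNormedType.Exports.
Import Order.TTheory GRing.Theory Num.Theory.

Set Implicit Arguments.
Unset Strict Implicit.
Unset Printing Implicit Defensive.

Local Open Scope classical_set_scope.
Local Open Scope ring_scope.

Definition rsum (R : realType) (u : nat -> R) : R := limn (series u).

Section Model.
Variables (R : realType) (S A : finType) (X : Type) (nI : nat).
Variables (pi : S -> S -> R)                (* pi s s' = pi(s'|s) *)
          (zeta : X -> A -> S -> X)
          (p r : X -> A -> S -> R)
          (g : 'I_nI -> X -> A -> S -> R)
          (gbar : 'I_nI -> R)
          (beta : R).

(* A plan assigns an action to every shock history s^t = (s_0,...,s_t),
   represented as the (nonempty) sequence [:: s_0; ...; s_t]. *)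
Definition plan := seq S -> A.

(* State along a history: x(s^0) = x0, x(s^{t+1}) = zeta(x(s^t), a(s^t), s_t). *)
Fixpoint xrun (a : plan) (x : X) (pre rest : seq S) : X :=
  match rest with
  | st :: ((_ :: _) as rest') =>
      xrun a (zeta x (a (rcons pre st)) st) (rcons pre st) rest'
  | _ => x
  end.
Definition xh (a : plan) (x0 : X) (h : seq S) : X := xrun a x0 [::] h.

Definition stage (f : X -> A -> S -> R) (a : plan) (x0 : X) (h : seq S) : R :=
  if h is s0 :: h' then f (xh a x0 h) (a h) (last s0 h') else 0.

Fixpoint pchain (s : seq S) : R :=
  match s with
  | x :: ((y :: _) as s') => pi x y * pchain s'
  | _ => 1
  end.

Definition probt (s0 : S) (h : seq S) : R :=
  if h is s0' :: _ then (s0' == s0)%:R * pchain h else 0.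

(* probability of the continuation c = (s_{t+1},...,s_{t+n}) given s^t = h *)
Definition cprob (h c : seq S) : R :=
  if h is s0 :: h' then pchain (last s0 h' :: c) else pchain c.

(* E_{s_t} sum_{n>=0} beta^n f(x(s^{t+n}), a(s^{t+n}), s_{t+n}) given s^t = h *)
Definition future (f : X -> A -> S -> R) (a : plan) (x0 : X) (h : seq S) : R :=
  rsum (fun n => beta ^+ n *
    \sum_(c : n.-tuple S) cprob h c * stage f a x0 (h ++ c)).

(* actions (a(s^0),...,a(s^{t-1})) generated along s^t = h *)
Definition acts (a : plan) (h : seq S) : seq A :=
  [seq a (take k h) | k <- iota 1 (size h).-1].

Definition Ainf (x0 : X) : set plan :=
  [set a | forall (s0 : S) (s' : seq S),
      0 <= p (xh a x0 (s0 :: s')) (a (s0 :: s')) (last s0 s')].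

Definition feasible (x0 : X) (s0 : S) (a : plan) : Prop :=
  Ainf x0 a /\
  forall (s' : seq S) (i : 'I_nI), gbar i <= future (g i) a x0 (s0 :: s').

(* multipliers lambda^i(h^t), h^t = (s^t, (a_0,...,a_{t-1})) *)
Definition multipliers := 'I_nI -> seq S -> seq A -> R.

Definition Lambda (s0 : S) : set multipliers :=
  [set lam : multipliers | (forall i h u, 0 <= lam i h u) /\
     cvgn (series (fun t : nat => beta ^+ t *
        \sum_(w : t.+1.-tuple S) \sum_(u : t.-tuple A) \sum_(i < nI)
           lam i (val w) (val u) * probt s0 w))].

Definition Lagr (a : plan) (lam : multipliers) (gam : 'I_nI -> R)
    (x0 : X) (s0 : S) : R :=
  rsum (fun t : nat => beta ^+ t *
    \sum_(w : t.+1.-tuple S) probt s0 w *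
      (stage r a x0 w + \sum_(i < nI) gam i * stage (g i) a x0 w
       + \sum_(i < nI) lam i w (acts a w) * (future (g i) a x0 w - gbar i))).

Definition Dval (gam : 'I_nI -> R) (x0 : X) (s0 : S) : \bar R :=
  ereal_inf [set ereal_sup [set (Lagr a lam gam x0 s0)%:E | a in Ainf x0]
            | lam in Lambda s0].

Definition nonneg (gam : 'I_nI -> R) : Prop := forall i, 0 <= gam i.

Definition Bell (F : ('I_nI -> R) -> X -> S -> R)
    (gam : 'I_nI -> R) (x : X) (s : S) : \bar R :=
  ereal_inf [set ereal_sup
     [set (r x a s + \sum_(i < nI) (gam i * g i x a s + lam i * (g i x a s - gbar i))
           + beta * \sum_(s' : S) pi s s' * F (fun i => gam i + lam i) (zeta x a s) s')%:E
     | a in [set a : A | 0 <= p x a s]]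
   | lam in [set lam : 'I_nI -> R | nonneg lam]].

Definition supnorm (f : X -> A -> S -> R) : R :=
  sup [set y | exists x a s, y = `|f x a s|].

Definition Lconst : R :=
  (supnorm r + \sum_(i < nI) supnorm (g i)) / (1 - beta).

Definition Bk (k : nat) : set ('I_nI -> R) :=
  [set gam | nonneg gam /\ forall i, gam i <= k%:R].

Definition Linf_Bk (F : ('I_nI -> R) -> X -> S -> R) (x : X) (s : S) (k : nat) : R :=
  sup [set y | exists2 gam, Bk k gam & y = `|F gam x s|].

(* Membership in the space M, with the enumeration x_{j+1} = xe j of X and
   s_{i} = the (enum_rank s + 1)-th element of S. *)
Definition inM (xe : nat -> X) (F : ('I_nI -> R) -> X -> S -> R) : Prop :=
  (forall x s k, exists C : R, forall gam, Bk k gam -> `|F gam x s| <= C) /\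
  (forall s j, cvgn (series (fun k : nat =>
       (2%:R ^- k.+1) * Linf_Bk F (xe j) s k.+1))) /\
  (forall s, cvgn (series (fun j : nat =>
       (2%:R ^- j.+1) * rsum (fun k : nat =>
          (2%:R ^- k.+1) * Linf_Bk F (xe j) s k.+1)))).

Definition inN (xe : nat -> X) (F : ('I_nI -> R) -> X -> S -> R) : Prop :=
  inM xe F /\
  forall (x : X) (s : S),
    (forall g1 g2 (t : R), nonneg g1 -> nonneg g2 -> 0 <= t <= 1 ->
        F (fun i => t * g1 i + (1 - t) * g2 i) x s
        <= t * F g1 x s + (1 - t) * F g2 x s) /\
    (forall g1 g2, nonneg g1 -> nonneg g2 ->
        `|F g1 x s - F g2 x s| <= Lconst * \sum_(i < nI) `|g1 i - g2 i|) /\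
    (forall a, feasible x s a -> forall gam, nonneg gam ->
        future r a x [:: s] + \sum_(i < nI) gam i * future (g i) a x [:: s]
        <= F gam x s) /\
    (forall gam, nonneg gam -> F gam x s <= (1 + \sum_(i < nI) gam i) * Lconst).

End Model.

From mathcomp Require Import all_boot all_order all_algebra.
From mathcomp Require Import all_classical all_reals all_analysis.
From mathcomp Require Import ring lra zify.
Import numFieldNormedType.Exports.
Import Order.TTheory GRing.Theory Num.Theory.
Local Open Scope classical_set_scope.
Local Open Scope ring_scope.

(* Fix multipliers lam in Lambda. Because F = B(F), at every history h there is
   an admissible action whose Bellman objective, evaluated at the accumulated
   weight Gamma(h) = gam + (sum of lam along the strict prefixes of h) and at
   lam(h), dominates F(Gamma(h), x(h), s_t); choosing such actions recursively
   defines a plan a.  The adjusted value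
     H(h) = F(Gamma(h), x(h), s_t) - sum_i (Gamma^i(h) - gam^i) v^i(h),
   with v^i(h) the continuation value of g^i, then satisfies
   H(h) <= l(h) + beta E[H(h') | h], where l(h) is the period-t integrand of
   the Lagrangian L(a, lam).  Iterating T times,
     F(gam, x, s) = H(s) <= (T-th partial sum of L(a, lam)) + beta^T E[H(h_T)].
   By the bound (iv) in the definition of N (the only property of N used),
   H(h_T) grows at most linearly in the multipliers accumulated along h_T, and
   summability of beta^t m_t forces beta^T sum_(t<T) m_t -> 0, so the
   remainder vanishes.  Hence F <= L(a, lam) <= sup_a L, and taking the
   infimum over lam gives F <= D. *)

Section TupleSums.
Variables (V : nmodType) (T : finType).

Lemma big_tuple0 (f : seq T -> V) : \sum_(c : 0.-tuple T) f c = f [::].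
Proof.
rewrite (eq_bigr (fun _ => f [::])); last by move=> c _; rewrite tuple0.
by rewrite sumr_const card_tuple expn0.
Qed.

Lemma big_tuple_cons n (f : seq T -> V) :
  \sum_(c : n.+1.-tuple T) f c = \sum_(x : T) \sum_(c : n.-tuple T) f (x :: c).
Proof.
rewrite pair_big /= (reindex (fun p : T * n.-tuple T => [tuple of p.1 :: p.2])) //=.
exists (fun c : n.+1.-tuple T => (thead c, [tuple of behead c])).
  by move=> [x c] _ /=; congr pair; apply: val_inj.
by move=> c _; rewrite [c in RHS]tuple_eta.
Qed.

End TupleSums.

Arguments big_tuple0 {V T}.
Arguments big_tuple_cons {V T n}.

Section MarkovChain.
Variables (R : realType) (S : finType) (pi : S -> S -> R).
Hypothesis pi_pos : forall s s', 0 < pi s s'.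
Hypothesis pi_sum : forall s, \sum_(s' : S) pi s s' = 1.

Lemma pchain_ge0 c : 0 <= pchain pi c.
Proof.
elim: c => [|x [|y c] IH] //=.
by rewrite mulr_ge0 // ltW.
Qed.

Lemma cprob_ge0 h c : 0 <= cprob pi h c.
Proof. by case: h => [|s w]; apply: pchain_ge0. Qed.

Lemma probt_ge0 s0 h : 0 <= probt pi s0 h.
Proof. by case: h => [|x h]; rewrite /probt ?mulr_ge0 ?ler0n ?pchain_ge0. Qed.

Lemma sum_pchain n s : \sum_(c : n.-tuple S) pchain pi (s :: c) = 1.
Proof.
elim: n s => [|n IH] s; first by rewrite (big_tuple0 (fun c => pchain pi (s :: c))).
rewrite (big_tuple_cons (fun c => pchain pi (s :: c))) -(pi_sum s).
by apply: eq_bigr => x _ /=; rewrite -big_distrr /= IH mulr1.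
Qed.

Lemma sum_cprob n s w : \sum_(c : n.-tuple S) cprob pi (s :: w) c = 1.
Proof. exact: sum_pchain. Qed.

Lemma sum_cprob0 s w (phi : seq S -> R) :
  \sum_(c : 0.-tuple S) cprob pi (s :: w) c * phi (w ++ c) = phi w.
Proof.
by rewrite (big_tuple0 (fun c => cprob pi (s :: w) c * phi (w ++ c))) /= cats0 mul1r.
Qed.

Lemma sum_cprobS n s w (phi : seq S -> R) :
  \sum_(c : n.+1.-tuple S) cprob pi (s :: w) c * phi (w ++ c) =
  \sum_(x : S) pi (last s w) x *
     \sum_(c : n.-tuple S) cprob pi (s :: rcons w x) c * phi (rcons w x ++ c).
Proof.
rewrite (big_tuple_cons (fun c => cprob pi (s :: w) c * phi (w ++ c))).
apply: eq_bigr => x _; rewrite big_distrr; apply: eq_bigr => c _ /=.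
by rewrite last_rcons cat_rcons mulrA.
Qed.

Lemma sum_probt t s0 (f : seq S -> R) :
  \sum_(w : t.+1.-tuple S) probt pi s0 w * f w =
  \sum_(c : t.-tuple S) cprob pi [:: s0] c * f (s0 :: c).
Proof.
rewrite (big_tuple_cons (fun w => probt pi s0 w * f w)) (bigD1 s0) //=.
rewrite [X in _ + X]big1 ?addr0; first by apply: eq_bigr => c _; rewrite eqxx mul1r.
by move=> x /negbTE xs0; apply: big1 => c _; rewrite xs0 !mul0r.
Qed.

End MarkovChain.

Arguments pchain_ge0 {R S pi}.
Arguments cprob_ge0 {R S pi}.
Arguments probt_ge0 {R S pi}.
Arguments sum_pchain {R S pi}.
Arguments sum_cprob {R S pi}.
Arguments sum_cprob0 {R S}.
Arguments sum_cprobS {R S}.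
Arguments sum_probt {R S}.

Section Series.
Variable R : realType.

Lemma cvg_series_norm_le (u v : nat -> R) :
  (forall n, `|u n| <= v n) -> cvgn (series v) -> cvgn (series u).
Proof.
move=> uv cv; apply: normed_cvg; apply: (series_le_cvg (v_ := v)) => // n.
- exact: normr_ge0.
- exact: le_trans (normr_ge0 _) (uv n).
Qed.

Lemma series_nondecreasing (u : nat -> R) : (forall n, 0 <= u n) ->
  {homo series u : n m / (n <= m)%N >-> n <= m}.
Proof.
move=> u_ge0 n m nm; rewrite /series /=.
exact: (@nondecreasing_series R u xpredT 0%N (fun k _ _ => u_ge0 k)).
Qed.

(* With d T = beta^T * sum_(t<T) m t one has d (T+1) = beta (d T + beta^T m T),
   so the partial sums of d are bounded by beta/(1-beta) times those of
   beta^t m t; hence d is even summable. *)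
Lemma discounted_cumsum_cvg0 (beta : R) (m : nat -> R) : 0 < beta -> beta < 1 ->
  (forall t, 0 <= m t) -> cvgn (series (fun t => beta ^+ t * m t)) ->
  (fun T => beta ^+ T * \sum_(t < T) m t) @ \oo --> 0.
Proof.
move=> b0 b1 m_ge0 cvb.
set b := fun t => beta ^+ t * m t.
set d := fun T => beta ^+ T * \sum_(t < T) m t.
have b_ge0 t : 0 <= b t by rewrite mulr_ge0 // exprn_ge0 // ltW.
have d_ge0 T : 0 <= d T.
  by apply: mulr_ge0; [rewrite exprn_ge0 // ltW | apply: sumr_ge0].
have dS T : d T.+1 = beta * (d T + b T).
  by rewrite /d /b big_ord_recr /= exprS -mulrA mulrDr.
have series_dS N : series d N.+1 = beta * (series d N + series b N).
  elim: N => [|N IH].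
    by rewrite /series /= big_nat1 !big_geq // /d big_ord0 mulr0 addr0 mulr0.
  rewrite [LHS]seriesSr {1}IH dS [series b N.+1]seriesSr [series d N.+1]seriesSr.
  ring.
set B := limn (series b).
have le_B N : series b N <= B.
  by apply: nondecreasing_cvgn_le => //; exact: series_nondecreasing.
apply: cvg_series_cvg_0; apply: nondecreasing_is_cvgn.
  exact: series_nondecreasing.
exists (beta * B / (1 - beta)) => _ [N _ <-].
have := @series_nondecreasing d d_ge0 _ _ (leqnSn N); rewrite series_dS => le_dS.
by rewrite ler_pdivlMr ?subr_gt0 //; have := le_B N; nra.
Qed.

End Series.

Section UniformBound.
Variables (R : realType) (X A S : Type).

Lemma norm_bound_ge0 (f : X -> A -> S -> R) :
  (exists C, forall x a s, `|f x a s| <= C) ->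
  exists2 C, 0 <= C & forall x a s, `|f x a s| <= C.
Proof.
move=> [C f_le]; exists `|C| => // x a s.
exact: le_trans (f_le x a s) (ler_norm C).
Qed.

Lemma norm_bound_family (I : finType) (f : I -> X -> A -> S -> R) :
  (forall i, exists C, forall x a s, `|f i x a s| <= C) ->
  exists2 C, 0 <= C & forall i x a s, `|f i x a s| <= C.
Proof.
move=> f_bdd.
have /choice[C C_bdd] : forall i, exists C, 0 <= C /\ forall x a s, `|f i x a s| <= C.
  by move=> i; have [C C_ge0 fC] := norm_bound_ge0 _ (f_bdd i); exists C.
exists (\sum_i C i); first by apply: sumr_ge0 => i _; case: (C_bdd i).
move=> i x a s; apply: le_trans (proj2 (C_bdd i) x a s) _.
by rewrite (bigD1 i) //= lerDl sumr_ge0 // => j _; case: (C_bdd j).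
Qed.

End UniformBound.

Arguments norm_bound_ge0 {R X A S f}.
Arguments norm_bound_family {R X A S I f}.

Section CausalFixpoint.
Variables (T U : Type).

Definition agree (b b' : seq T -> U) k := forall v : seq T, (size v < k)%N -> b v = b' v.

Lemma agree_le b b' j k : agree b b' k -> (j <= k)%N -> agree b b' j.
Proof. by move=> bb' jk v vj; apply: bb'; apply: leq_trans vj jk. Qed.

Variable Phi : (seq T -> U) -> seq T -> U.
Hypothesis Phi_causal : forall b b' h, agree b b' (size h) -> Phi b h = Phi b' h.
Variable b0 : seq T -> U.

(* Phi b h only reads b below the length of h, so the iterates of Phi agree on
   histories of length < n from the n-th iterate on. *)
Definition causal_fix : seq T -> U := fun h => iter (size h).+1 Phi b0 h.

Lemma iter_causal_step n : agree (iter n.+1 Phi b0) (iter n Phi b0) n.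
Proof.
elim: n => [|n IH] v //= hv.
by apply: Phi_causal; apply: agree_le IH _.
Qed.

Lemma iter_causal_agree n d : agree (iter (n + d) Phi b0) (iter n Phi b0) n.
Proof.
elim: d => [|d IH] v hv; first by rewrite addn0.
by rewrite addnS iter_causal_step ?IH //; lia.
Qed.

Lemma causal_fix_agree k : agree causal_fix (iter k Phi b0) k.
Proof.
move=> v hv; rewrite /causal_fix.
have -> : k = ((size v).+1 + (k - (size v).+1))%N by lia.
by rewrite iter_causal_agree.
Qed.

Lemma causal_fixE h : causal_fix h = Phi causal_fix h.
Proof.
by apply: Phi_causal => v hv; symmetry; apply: causal_fix_agree.
Qed.

End CausalFixpoint.

Arguments agree {T U}.
Arguments causal_fix {T U}.
Arguments causal_fixE {T U Phi}.

Section Histories.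
Variables (R : realType) (S A : finType) (X : Type) (nI : nat).
Variables (zeta : X -> A -> S -> X) (x0 : X).
Variables (gam0 : 'I_nI -> R) (lam : multipliers R S A nI).

Lemma xrun_rcons (a : plan S A) y pre st w x :
  xrun zeta a y pre (st :: rcons w x) =
  zeta (xrun zeta a y pre (st :: w)) (a (pre ++ st :: w)) (last st w).
Proof.
have xrunE y' pre' st' w1 l : xrun zeta a y' pre' [:: st', w1 & l] =
   xrun zeta a (zeta y' (a (rcons pre' st')) st') (rcons pre' st') (w1 :: l) by [].
elim: w y pre st => [|w1 w IH] y pre st; first by rewrite /= cats1.
by rewrite rcons_cons !xrunE IH cat_rcons.
Qed.

Lemma xh_rcons (a : plan S A) s w x :
  xh zeta a x0 (s :: rcons w x) = zeta (xh zeta a x0 (s :: w)) (a (s :: w)) (last s w).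
Proof. exact: xrun_rcons. Qed.

(* The weight gamma + lambda(h^0) + ... + lambda(h^(t-1)) accumulated before
   the last date of the history h = s^t, and the multiplier lambda(h^t). *)
Definition weight_at (a : plan S A) (h : seq S) (i : 'I_nI) : R :=
  gam0 i + \sum_(k < (size h).-1) lam i (take k.+1 h) (acts a (take k.+1 h)).

Definition mult_at (a : plan S A) (h : seq S) (i : 'I_nI) : R := lam i h (acts a h).

Lemma weight_at1 a s : weight_at a [:: s] = gam0.
Proof. by apply: funext => i; rewrite /weight_at /= big_ord0 addr0. Qed.

Lemma weight_at_rcons a s w x :
  weight_at a (s :: rcons w x) = (fun i => weight_at a (s :: w) i + mult_at a (s :: w) i).
Proof.
apply: funext => i; rewrite /weight_at /= size_rcons big_ord_recr /= -addrA.
congr (_ + (_ + _)); last by rewrite -cats1 takel_cat // take_size.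
by apply: eq_bigr => k _ /=; rewrite -cats1 takel_cat // ltnW.
Qed.

Lemma weight_at_ge a h i : (forall i h u, 0 <= lam i h u) -> gam0 i <= weight_at a h i.
Proof. by move=> lam_ge0; rewrite /weight_at lerDl sumr_ge0. Qed.

Lemma xrun_agree (b b' : plan S A) rest y pre : agree b b' (size pre + size rest) ->
  xrun zeta b y pre rest = xrun zeta b' y pre rest.
Proof.
elim: rest y pre => [|st [|st' l] IH] y pre //= bb'.
rewrite bb'; last by rewrite size_rcons /=; lia.
by apply: IH; apply: agree_le bb' _; rewrite size_rcons /=; lia.
Qed.

Lemma xh_agree (b b' : plan S A) h : agree b b' (size h) -> xh zeta b x0 h = xh zeta b' x0 h.
Proof. by move=> bb'; apply: xrun_agree; rewrite add0n. Qed.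

Lemma acts_agree (b b' : plan S A) h : agree b b' (size h) -> acts b h = acts b' h.
Proof.
move=> bb'; apply/eq_in_map => k; rewrite mem_iota => /andP[k1 k2].
by apply: bb'; rewrite size_take; case: ifP => //; lia.
Qed.

Lemma weight_at_agree (b b' : plan S A) h :
  agree b b' (size h) -> weight_at b h = weight_at b' h.
Proof.
move=> bb'; apply: funext => i; congr (_ + _); apply: eq_bigr => k _.
rewrite (@acts_agree b b') //; apply: agree_le bb' _.
by rewrite size_take; case: ifP => //; lia.
Qed.

Lemma mult_at_agree (b b' : plan S A) h : agree b b' (size h) -> mult_at b h = mult_at b' h.
Proof. by move=> bb'; apply: funext => i; rewrite /mult_at (acts_agree _ _ _ bb'). Qed.

End Histories.

Arguments weight_at {R S A nI}.
Arguments mult_at {R S A nI}.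
Arguments weight_at_ge {R S A nI gam0 lam a h i}.
Arguments xh_agree {S A X zeta x0 b b' h}.
Arguments weight_at_agree {R S A nI gam0 lam b b' h}.
Arguments mult_at_agree {R S A nI lam b b' h}.

Section ContinuationValues.
Variables (R : realType) (S A : finType) (X : Type).
Variables (pi : S -> S -> R) (zeta : X -> A -> S -> X) (beta : R).
Hypothesis pi_pos : forall s s', 0 < pi s s'.
Hypothesis pi_sum : forall s, \sum_(s' : S) pi s s' = 1.
Hypothesis beta_pos : 0 < beta.
Hypothesis beta_lt1 : beta < 1.
Variables (a : plan S A) (x0 : X) (f : X -> A -> S -> R).

Definition future_term (h : seq S) (n : nat) : R :=
  beta ^+ n * \sum_(c : n.-tuple S) cprob pi h c * stage zeta f a x0 (h ++ c).

Lemma futureE h : future pi zeta beta f a x0 h = limn (series (future_term h)).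
Proof. by []. Qed.

Lemma future_term0 s w : future_term (s :: w) 0 = stage zeta f a x0 (s :: w).
Proof.
by rewrite /future_term expr0 mul1r (sum_cprob0 pi s w (fun l => stage zeta f a x0 (s :: l))).
Qed.

Lemma future_termS s w n : future_term (s :: w) n.+1 =
  beta * \sum_(x : S) pi (last s w) x * future_term (s :: rcons w x) n.
Proof.
rewrite /future_term exprS -mulrA (sum_cprobS pi n s w (fun l => stage zeta f a x0 (s :: l))).
by rewrite big_distrr; congr (_ * _); apply: eq_bigr => x _; rewrite mulrCA.
Qed.

Variable Cf : R.
Hypothesis f_bdd : forall x act s, `|f x act s| <= Cf.
Hypothesis Cf_ge0 : 0 <= Cf.

Lemma stage_bdd h : `|stage zeta f a x0 h| <= Cf.
Proof. by case: h => [|s w] /=; rewrite ?normr0. Qed.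

Lemma future_term_bdd s w n : `|future_term (s :: w) n| <= Cf * beta ^+ n.
Proof.
have beta_n_ge0 : 0 <= beta ^+ n by rewrite exprn_ge0 // ltW.
rewrite normrM (ger0_norm beta_n_ge0) mulrC ler_wpM2r //.
apply: le_trans (ler_norm_sum _ _ _) _.
rewrite -[Cf]mulr1 -(sum_cprob pi_sum n s w) mulr_sumr; apply: ler_sum => c _.
have c_ge0 := cprob_ge0 pi_pos (s :: w) c.
by rewrite normrM (ger0_norm c_ge0) mulrC ler_wpM2r ?stage_bdd.
Qed.

Lemma cvg_future_term s w : cvgn (series (future_term (s :: w))).
Proof.
apply: (@cvg_series_norm_le _ _ (geometric Cf beta)); first exact: future_term_bdd.
by apply: is_cvg_geometric_series; rewrite ger0_norm ?ltW.
Qed.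

Lemma future_bdd s w : `|future pi zeta beta f a x0 (s :: w)| <= Cf / (1 - beta).
Proof.
have partial_bdd n : `|series (future_term (s :: w)) n| <= Cf / (1 - beta).
  apply: le_trans (_ : series (geometric Cf beta) n <= _).
    apply: le_trans (ler_norm_sum _ _ _) _.
    by apply: ler_sum => k _; apply: future_term_bdd.
  rewrite geometric_seriesE ?lt_eqF //= ler_pM2r ?invr_gt0 ?subr_gt0 //.
  by rewrite ler_piMr // lerBlDr lerDl exprn_ge0 ?ltW.
rewrite futureE ler_norml; apply/andP; split.
  apply: limr_ge; first exact: cvg_future_term.
  by apply: nearW => n; have := partial_bdd n; rewrite ler_norml => /andP[].
apply: limr_le; first exact: cvg_future_term.
by apply: nearW => n; have := partial_bdd n; rewrite ler_norml => /andP[].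
Qed.

Lemma future_rec s w :
  future pi zeta beta f a x0 (s :: w) = stage zeta f a x0 (s :: w) +
    beta * \sum_(x : S) pi (last s w) x * future pi zeta beta f a x0 (s :: rcons w x).
Proof.
set l := RHS.
suff : series (future_term (s :: w)) @ \oo --> l by rewrite futureE => /cvg_lim ->.
rewrite -cvg_shiftS.
have -> : [sequence series (future_term (s :: w)) n.+1]_n = fun n =>
   stage zeta f a x0 (s :: w) + beta * \sum_(x : S) pi (last s w) x *
     series (future_term (s :: rcons w x)) n.
  apply: funext => n /=; rewrite /series /= big_nat_recl // future_term0.
  congr (_ + _); under eq_bigr do rewrite future_termS.
  rewrite -mulr_sumr exchange_big /=; congr (_ * _).
  by apply: eq_bigr => x _; rewrite mulr_sumr.
apply: cvgD; first exact: cvg_cst.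
apply: cvgMl_tmp; apply: (@cvg_big _ _ +%R 0 xpredT add_continuous) => x _.
by apply: cvgMl_tmp; apply: cvg_future_term.
Qed.

End ContinuationValues.

Arguments stage_bdd {R S A X zeta a x0 f Cf}.
Arguments future_bdd {R S A X pi zeta beta} pi_pos pi_sum beta_pos beta_lt1 {a x0 f Cf}.
Arguments future_rec {R S A X pi zeta beta} pi_pos pi_sum beta_pos beta_lt1 {a x0 f Cf}.

Section BellmanObjective.
Variables (R : realType) (S A : finType) (X : Type) (nI : nat).
Variables (pi : S -> S -> R) (zeta : X -> A -> S -> X) (p r : X -> A -> S -> R)
  (g : 'I_nI -> X -> A -> S -> R) (gbar : 'I_nI -> R) (beta : R).
Variable F : ('I_nI -> R) -> X -> S -> R.

Definition bellman_obj x s (G L : 'I_nI -> R) act : R :=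
  r x act s + \sum_(i < nI) (G i * g i x act s + L i * (g i x act s - gbar i))
  + beta * \sum_(s' : S) pi s s' * F (fun i => G i + L i) (zeta x act s) s'.

(* The supremum over the finitely many admissible actions is a maximum, and it
   is not -oo (no admissible action) because F is finite. *)
Lemma bellman_fix_argmax x s G L : nonneg L ->
  Bell pi zeta p r g gbar beta F G x s = (F G x s)%:E ->
  exists2 act, 0 <= p x act s & F G x s <= bellman_obj x s G L act.
Proof.
move=> L_ge0 BF; apply: contrapT => no_act.
have obj_lt act : 0 <= p x act s -> bellman_obj x s G L act < F G x s.
  by move=> hp; rewrite ltNge; apply/negP => hle; apply: no_act; exists act.
have : (\big[Order.max/-oo]_(act | (0 <= p x act s)%R) (bellman_obj x s G L act)%:E
         < (F G x s)%:E)%E.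
  by apply: bigmax_lt => [|act hp]; rewrite ?ltNyr ?lte_fin ?obj_lt.
apply/negP; rewrite -leNgt -BF.
apply: le_trans (ereal_inf_lbound _) _; first by exists L.
apply: ge_ereal_sup => _ [act hp <-].
exact: (@le_bigmax_cond _ _ _ _ _ (fun act => 0 <= p x act s)).
Qed.

Variable adef : A.

Definition bellman_action x s G L : A :=
  xget adef [set act | 0 <= p x act s /\ F G x s <= bellman_obj x s G L act].

Hypothesis F_fix : forall G x s, nonneg G ->
  Bell pi zeta p r g gbar beta F G x s = (F G x s)%:E.

Lemma bellman_actionP x s G L : nonneg G -> nonneg L ->
  0 <= p x (bellman_action x s G L) s /\
  F G x s <= bellman_obj x s G L (bellman_action x s G L).
Proof.
move=> G_ge0 L_ge0.
have [act p_ge0 F_le] := bellman_fix_argmax x s G L L_ge0 (F_fix G x s G_ge0).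
by apply: (@xgetPex _ adef [set act | 0 <= p x act s /\ F G x s <= bellman_obj x s G L act]);
  exists act.
Qed.

End BellmanObjective.

Arguments bellman_obj {R S A X nI}.
Arguments bellman_action {R S A X nI}.
Arguments bellman_actionP {R S A X nI pi zeta p r g gbar beta F adef} F_fix {x s G L}.

Section GreedyPlan.
Variables (R : realType) (S A : finType) (X : Type) (nI : nat).
Variables (zeta : X -> A -> S -> X) (x0 : X).
Variables (gam0 : 'I_nI -> R) (lam : multipliers R S A nI) (adef : A).
Variable choose : X -> S -> ('I_nI -> R) -> ('I_nI -> R) -> A.

(* The empty sequence is not a history; [adef] there is a dummy value. *)
Definition greedy_step (b : plan S A) (h : seq S) : A :=
  if h is s :: w then
    choose (xh zeta b x0 h) (last s w) (weight_at gam0 lam b h) (mult_at lam b h)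
  else adef.

Lemma greedy_step_causal b b' h : agree b b' (size h) -> greedy_step b h = greedy_step b' h.
Proof.
case: h => [|s w] // bb'; rewrite /greedy_step.
by rewrite (xh_agree bb') (weight_at_agree bb') (mult_at_agree bb').
Qed.

Definition greedy_plan : plan S A := causal_fix greedy_step (fun _ => adef).

Lemma greedy_planE s w : greedy_plan (s :: w) =
  choose (xh zeta greedy_plan x0 (s :: w)) (last s w)
    (weight_at gam0 lam greedy_plan (s :: w)) (mult_at lam greedy_plan (s :: w)).
Proof. exact: (causal_fixE greedy_step_causal). Qed.

End GreedyPlan.

Arguments greedy_plan {R S A X nI}.
Arguments greedy_planE {R S A X nI}.

Section Telescope.
Variables (R : realType) (S A : finType) (X : Type) (nI : nat).
Variables (pi : S -> S -> R) (zeta : X -> A -> S -> X) (r : X -> A -> S -> R)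
  (g : 'I_nI -> X -> A -> S -> R) (gbar : 'I_nI -> R) (beta : R).
Hypothesis pi_pos : forall s s', 0 < pi s s'.
Hypothesis pi_sum : forall s, \sum_(s' : S) pi s s' = 1.
Hypothesis beta_pos : 0 < beta.
Hypothesis beta_lt1 : beta < 1.
Variables (x0 : X) (gam0 : 'I_nI -> R) (lam : multipliers R S A nI) (a : plan S A).
Variable F : ('I_nI -> R) -> X -> S -> R.
Variable Cg : R.
Hypothesis g_bdd : forall i x act s, `|g i x act s| <= Cg.
Hypothesis Cg_ge0 : 0 <= Cg.

Local Notation fut f h := (future pi zeta beta f a x0 h).
Local Notation xa h := (xh zeta a x0 h).
Local Notation Gam := (weight_at gam0 lam a).
Local Notation Lm := (mult_at lam a).

Hypothesis greedy : forall s w,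
  F (Gam (s :: w)) (xa (s :: w)) (last s w) <=
  bellman_obj pi zeta r g gbar beta F (xa (s :: w)) (last s w)
    (Gam (s :: w)) (Lm (s :: w)) (a (s :: w)).

Definition adjusted_value s w : R := F (Gam (s :: w)) (xa (s :: w)) (last s w)
  - \sum_(i < nI) (Gam (s :: w) i - gam0 i) * fut (g i) (s :: w).

Definition lagr_term (h : seq S) : R :=
  stage zeta r a x0 h + \sum_(i < nI) gam0 i * stage zeta (g i) a x0 h
  + \sum_(i < nI) lam i h (acts a h) * (fut (g i) h - gbar i).

Lemma exp_adjusted_value_rcons s w :
  \sum_(x : S) pi (last s w) x * adjusted_value s (rcons w x) =
  \sum_(x : S) pi (last s w) x * F (Gam (s :: rcons w x)) (xa (s :: rcons w x)) x
  - \sum_(i < nI) (Gam (s :: w) i + Lm (s :: w) i - gam0 i) *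
      \sum_(x : S) pi (last s w) x * fut (g i) (s :: rcons w x).
Proof.
have adjE x : adjusted_value s (rcons w x) =
    F (Gam (s :: rcons w x)) (xa (s :: rcons w x)) x
    - \sum_(i < nI) (Gam (s :: w) i + Lm (s :: w) i - gam0 i) * fut (g i) (s :: rcons w x).
  rewrite /adjusted_value last_rcons; congr (_ - _).
  by apply: eq_bigr => i _; rewrite weight_at_rcons.
under eq_bigr do rewrite adjE mulrBr mulr_sumr.
rewrite big_split /= sumrN exchange_big /=; congr (_ - _).
apply: eq_bigr => i _; rewrite mulr_sumr; apply: eq_bigr => x _.
by rewrite mulrCA.
Qed.

(* Unfolding v^i(h) = g^i + beta E[v^i(h') | h] on both sides leaves r plus
   beta E[F(Gamma(h'), x(h'), s')] plus sums over i that agree termwise. *)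
Lemma lagr_term_bellman s w :
  lagr_term (s :: w) + beta * \sum_(x : S) pi (last s w) x * adjusted_value s (rcons w x) =
  bellman_obj pi zeta r g gbar beta F (xa (s :: w)) (last s w)
    (Gam (s :: w)) (Lm (s :: w)) (a (s :: w))
  - \sum_(i < nI) (Gam (s :: w) i - gam0 i) * fut (g i) (s :: w).
Proof.
set y := xa (s :: w); set act := a (s :: w); set sx := last s w.
set G := Gam (s :: w); set L := Lm (s :: w).
set Fnext := fun x => F (Gam (s :: rcons w x)) (xa (s :: rcons w x)) x.
set P := fun i => \sum_(x : S) pi sx x * fut (g i) (s :: rcons w x).
have futE i : fut (g i) (s :: w) = g i y act sx + beta * P i.
  exact: (future_rec pi_pos pi_sum beta_pos beta_lt1 (g_bdd i) Cg_ge0).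
have exp_adjusted : \sum_(x : S) pi sx x * adjusted_value s (rcons w x) =
    \sum_(x : S) pi sx x * Fnext x - \sum_(i < nI) (G i + L i - gam0 i) * P i.
  exact: exp_adjusted_value_rcons.
have objE : bellman_obj pi zeta r g gbar beta F y sx G L act =
    r y act sx + \sum_(i < nI) (G i * g i y act sx + L i * (g i y act sx - gbar i))
    + beta * \sum_(x : S) pi sx x * Fnext x.
  rewrite /bellman_obj /Fnext; congr (_ + _ * _); apply: eq_bigr => x _.
  by rewrite weight_at_rcons xh_rcons.
have lhsE : lagr_term (s :: w) + beta * \sum_(x : S) pi sx x * adjusted_value s (rcons w x) =
    r y act sx + beta * \sum_(x : S) pi sx x * Fnext x +
    \sum_(i < nI) (gam0 i * g i y act sx + L i * (g i y act sx + beta * P i - gbar i)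
                   - beta * ((G i + L i - gam0 i) * P i)).
  have multE : \sum_(i < nI) lam i (s :: w) (acts a (s :: w)) * (fut (g i) (s :: w) - gbar i)
      = \sum_(i < nI) L i * (g i y act sx + beta * P i - gbar i).
    by apply: eq_bigr => i _; rewrite futE.
  rewrite exp_adjusted /lagr_term multE !big_split /= sumrN mulrBr -!mulr_sumr.
  rewrite -/y -/act -/sx; lra.
have rhsE : bellman_obj pi zeta r g gbar beta F y sx G L act
      - \sum_(i < nI) (G i - gam0 i) * fut (g i) (s :: w) =
    r y act sx + beta * \sum_(x : S) pi sx x * Fnext x +
    \sum_(i < nI) (G i * g i y act sx + L i * (g i y act sx - gbar i)
                   - (G i - gam0 i) * (g i y act sx + beta * P i)).
  under [X in _ - X]eq_bigr do rewrite futE.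
  rewrite objE !big_split /= sumrN; lra.
rewrite lhsE rhsE; congr (_ + _); apply: eq_bigr => i _; ring.
Qed.

Lemma adjusted_value_step s w : adjusted_value s w <=
  lagr_term (s :: w) + beta * \sum_(x : S) pi (last s w) x * adjusted_value s (rcons w x).
Proof. by rewrite lagr_term_bellman /adjusted_value lerD2r greedy. Qed.

Definition exp_lagr_term s w t : R :=
  \sum_(c : t.-tuple S) cprob pi (s :: w) c * lagr_term (s :: w ++ c).

Lemma exp_lagr_term0 s w : exp_lagr_term s w 0 = lagr_term (s :: w).
Proof. exact: (sum_cprob0 pi s w (fun l => lagr_term (s :: l))). Qed.

Lemma exp_lagr_termS s w t :
  exp_lagr_term s w t.+1 = \sum_(x : S) pi (last s w) x * exp_lagr_term s (rcons w x) t.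
Proof. exact: (sum_cprobS pi t s w (fun l => lagr_term (s :: l))). Qed.

Lemma adjusted_value_telescope T s w : adjusted_value s w <=
  \sum_(t < T) beta ^+ t * exp_lagr_term s w t +
  beta ^+ T * \sum_(c : T.-tuple S) cprob pi (s :: w) c * adjusted_value s (w ++ c).
Proof.
elim: T s w => [|T IH] s w.
  by rewrite big_ord0 add0r expr0 mul1r (sum_cprob0 pi s w (adjusted_value s)).
have unfold_step : \sum_(t < T.+1) beta ^+ t * exp_lagr_term s w t + beta ^+ T.+1 *
     \sum_(c : T.+1.-tuple S) cprob pi (s :: w) c * adjusted_value s (w ++ c)
  = lagr_term (s :: w) + beta * \sum_(x : S) pi (last s w) x *
      (\sum_(t < T) beta ^+ t * exp_lagr_term s (rcons w x) t + beta ^+ T *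
       \sum_(c : T.-tuple S) cprob pi (s :: rcons w x) c * adjusted_value s (rcons w x ++ c)).
  rewrite big_ord_recl expr0 mul1r exp_lagr_term0 -addrA; congr (_ + _).
  under [in RHS]eq_bigr do rewrite mulrDr.
  rewrite big_split mulrDr /=; congr (_ + _).
    under eq_bigr => t _ do rewrite /bump /= add1n exp_lagr_termS exprS -mulrA mulr_sumr.
    rewrite -mulr_sumr exchange_big /=; congr (_ * _); apply: eq_bigr => x _.
    by rewrite mulr_sumr; apply: eq_bigr => t _; rewrite mulrCA.
  rewrite (sum_cprobS pi T s w (adjusted_value s)) exprS -mulrA mulr_sumr; congr (_ * _).
  by apply: eq_bigr => x _; rewrite mulrCA.
rewrite unfold_step; apply: le_trans (adjusted_value_step s w) _.
rewrite lerD2l; apply: ler_wpM2l; first exact: ltW.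
apply: ler_sum => x _; apply: ler_wpM2l; [exact: ltW | exact: IH].
Qed.

Lemma exp_weight_sum T s w :
  \sum_(c : T.-tuple S) cprob pi (s :: w) c * \sum_(i < nI) Gam (s :: w ++ c) i =
  \sum_(i < nI) Gam (s :: w) i + \sum_(t < T) \sum_(c : t.-tuple S)
     cprob pi (s :: w) c * \sum_(i < nI) Lm (s :: w ++ c) i.
Proof.
elim: T s w => [|T IH] s w.
  by rewrite big_ord0 addr0 (sum_cprob0 pi s w (fun l => \sum_(i < nI) Gam (s :: l) i)).
rewrite (sum_cprobS pi T s w (fun l => \sum_(i < nI) Gam (s :: l) i)).
under eq_bigr do rewrite IH weight_at_rcons big_split /=.
rewrite big_ord_recl /= (sum_cprob0 pi s w (fun l => \sum_(i < nI) Lm (s :: l) i)).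
under [X in _ = _ + (_ + X)]eq_bigr => t _ do
  rewrite /bump /= add1n (sum_cprobS pi t s w (fun l => \sum_(i < nI) Lm (s :: l) i)).
rewrite exchange_big /= addrA.
under eq_bigr do rewrite mulrDr.
rewrite big_split /= -big_distrl /= pi_sum mul1r; congr (_ + _).
by apply: eq_bigr => x _; rewrite mulr_sumr.
Qed.

Lemma future_g_bdd i s w : `|fut (g i) (s :: w)| <= Cg / (1 - beta).
Proof.
exact: (future_bdd pi_pos pi_sum beta_pos beta_lt1 (a := a) (x0 := x0) (g_bdd i) Cg_ge0).
Qed.

Variables (Lc Cr : R).
Hypothesis F_ub : forall G x s, nonneg G -> F G x s <= (1 + \sum_(i < nI) G i) * Lc.
Hypothesis gam0_ge0 : nonneg gam0.
Hypothesis lam_ge0 : forall i h u, 0 <= lam i h u.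
Hypothesis r_bdd : forall x act s, `|r x act s| <= Cr.
Hypothesis Cr_ge0 : 0 <= Cr.

Lemma adjusted_value_bdd s w : adjusted_value s w <= (1 + \sum_(i < nI) gam0 i) * `|Lc| +
   (`|Lc| + Cg / (1 - beta)) * \sum_(i < nI) (Gam (s :: w) i - gam0 i).
Proof.
set SG := \sum_(i < nI) gam0 i.
set D := \sum_(i < nI) (Gam (s :: w) i - gam0 i).
have sum_Gam : \sum_(i < nI) Gam (s :: w) i = SG + D by rewrite /D sumrB /SG; lra.
have Gam_ge0 : nonneg (Gam (s :: w)).
  by move=> i; apply: le_trans (gam0_ge0 i) (weight_at_ge lam_ge0).
have F_le : F (Gam (s :: w)) (xa (s :: w)) (last s w) <= (1 + (SG + D)) * `|Lc|.
  apply: le_trans (F_ub _ _ _ Gam_ge0) _; rewrite sum_Gam ler_wpM2l ?ler_norm //.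
  by rewrite -sum_Gam addr_ge0 // sumr_ge0.
have fut_le : - \sum_(i < nI) (Gam (s :: w) i - gam0 i) * fut (g i) (s :: w)
    <= D * (Cg / (1 - beta)).
  rewrite -sumrN /D mulr_suml; apply: ler_sum => i _; rewrite -mulrN ler_wpM2l //.
    by rewrite subr_ge0 (weight_at_ge lam_ge0).
  by have := future_g_bdd i s w; rewrite ler_norml lerNl => /andP[].
have -> : (1 + SG) * `|Lc| + (`|Lc| + Cg / (1 - beta)) * D =
    (1 + (SG + D)) * `|Lc| + D * (Cg / (1 - beta)) by ring.
exact: lerD F_le fut_le.
Qed.

Lemma lagr_term_bdd s w : `|lagr_term (s :: w)| <= (Cr + (\sum_(i < nI) gam0 i) * Cg) +
   (Cg / (1 - beta) + \sum_(i < nI) `|gbar i|) * \sum_(i < nI) Lm (s :: w) i.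
Proof.
have gbar_le i : `|gbar i| <= \sum_(j < nI) `|gbar j|.
  by rewrite (bigD1 i) //= lerDl sumr_ge0.
rewrite /lagr_term; apply: le_trans (ler_normD _ _) _; apply: lerD.
  apply: le_trans (ler_normD _ _) _; apply: lerD; first exact: stage_bdd.
  apply: le_trans (ler_norm_sum _ _ _) _; rewrite mulr_suml; apply: ler_sum => i _.
  by rewrite normrM ger0_norm // ler_wpM2l // stage_bdd.
apply: le_trans (ler_norm_sum _ _ _) _; rewrite mulr_sumr; apply: ler_sum => i _.
rewrite normrM ger0_norm // mulrC ler_wpM2r //.
apply: le_trans (ler_normB _ _) _; apply: lerD; last exact: gbar_le.
exact: future_g_bdd.
Qed.

Definition exp_mult s0 t : R :=
  \sum_(c : t.-tuple S) cprob pi [:: s0] c * \sum_(i < nI) Lm (s0 :: c) i.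

Lemma exp_mult_ge0 s0 t : 0 <= exp_mult s0 t.
Proof.
apply: sumr_ge0 => c _; rewrite mulr_ge0 ?(cprob_ge0 pi_pos) //.
by apply: sumr_ge0 => i _; apply: lam_ge0.
Qed.

(* Among the action sequences u summed over in the definition of Lambda, keep
   only u = acts a w. *)
Lemma cvg_discounted_exp_mult s0 : Lambda pi beta s0 lam ->
  cvgn (series (fun t => beta ^+ t * exp_mult s0 t)).
Proof.
move=> [_ cvLam].
have beta_t_ge0 t : 0 <= beta ^+ t by rewrite exprn_ge0 // ltW.
apply: (series_le_cvg _ _ _ cvLam) => t.
- by rewrite mulr_ge0 ?exp_mult_ge0.
- rewrite mulr_ge0 //; apply: sumr_ge0 => w _; apply: sumr_ge0 => u _.
  by apply: sumr_ge0 => i _; rewrite mulr_ge0 ?(probt_ge0 pi_pos).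
rewrite ler_wpM2l // /exp_mult.
rewrite -(sum_probt pi t s0 (fun w => \sum_(i < nI) Lm w i)); apply: ler_sum => w _.
have size_acts : size (acts a w) == t by rewrite size_map size_iota size_tuple.
rewrite (bigD1 (Tuple size_acts)) //= -[leLHS]addr0; apply: lerD.
  by rewrite mulr_sumr; apply: ler_sum => i _; rewrite mulrC.
apply: sumr_ge0 => u _; apply: sumr_ge0 => i _.
by rewrite mulr_ge0 ?(probt_ge0 pi_pos).
Qed.

Lemma LagrE s0 : Lagr pi zeta r g gbar beta a lam gam0 x0 s0 =
  limn (series (fun t => beta ^+ t * exp_lagr_term s0 [::] t)).
Proof.
rewrite /Lagr /rsum; congr (limn (series _)); apply: funext => t; congr (_ * _).
exact: (sum_probt pi t s0 lagr_term).
Qed.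

Lemma cvg_lagr_series s0 : cvgn (series (fun t => beta ^+ t * exp_mult s0 t)) ->
  cvgn (series (fun t => beta ^+ t * exp_lagr_term s0 [::] t)).
Proof.
set Ccst := Cr + (\sum_(i < nI) gam0 i) * Cg.
set Cmult := Cg / (1 - beta) + \sum_(i < nI) `|gbar i|.
have Cmult_ge0 : 0 <= Cmult.
  by apply: addr_ge0; [rewrite divr_ge0 // subr_ge0 ltW | apply: sumr_ge0].
move=> cvm; apply: (@cvg_series_norm_le _ _
  (geometric Ccst beta + Cmult *: (fun t => beta ^+ t * exp_mult s0 t))); last first.
  apply: is_cvg_seriesD; last exact: is_cvg_seriesZ.
  by apply: is_cvg_geometric_series; rewrite ger0_norm ?ltW.
move=> t; have beta_t_ge0 : 0 <= beta ^+ t by rewrite exprn_ge0 // ltW.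
rewrite normrM (ger0_norm beta_t_ge0).
have -> : (geometric Ccst beta + Cmult *: (fun t => beta ^+ t * exp_mult s0 t)) t =
    beta ^+ t * (Ccst + Cmult * exp_mult s0 t).
  by transitivity (Ccst * beta ^+ t + Cmult * (beta ^+ t * exp_mult s0 t)); last ring.
apply: ler_wpM2l => //; apply: le_trans (ler_norm_sum _ _ _) _.
apply: le_trans (_ : \sum_(c : t.-tuple S) cprob pi [:: s0] c *
    (Ccst + Cmult * \sum_(i < nI) Lm (s0 :: c) i) <= _).
  apply: ler_sum => c _; rewrite normrM ger0_norm ?(cprob_ge0 pi_pos) //.
  by apply: ler_wpM2l; [exact: (cprob_ge0 pi_pos) | exact: lagr_term_bdd].
have -> : \sum_(c : t.-tuple S) cprob pi [:: s0] c * (Ccst + Cmult * \sum_(i < nI) Lm (s0 :: c) i)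
    = Ccst * \sum_(c : t.-tuple S) cprob pi [:: s0] c + Cmult * exp_mult s0 t.
  by rewrite /exp_mult !mulr_sumr -big_split; apply: eq_bigr => c _ /=; ring.
by rewrite (sum_cprob pi_sum) mulr1.
Qed.

Lemma exp_adjusted_value_bdd T s0 :
  \sum_(c : T.-tuple S) cprob pi [:: s0] c * adjusted_value s0 c <=
  (1 + \sum_(i < nI) gam0 i) * `|Lc| +
  (`|Lc| + Cg / (1 - beta)) * \sum_(t < T) exp_mult s0 t.
Proof.
set K0 := (1 + \sum_(i < nI) gam0 i) * `|Lc|.
set K1 := `|Lc| + Cg / (1 - beta).
apply: le_trans (_ : \sum_(c : T.-tuple S) cprob pi [:: s0] c *
   (K0 + K1 * \sum_(i < nI) (Gam (s0 :: c) i - gam0 i)) <= _).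
  apply: ler_sum => c _; rewrite ler_wpM2l ?(cprob_ge0 pi_pos) //.
  exact: adjusted_value_bdd.
have -> : \sum_(c : T.-tuple S) cprob pi [:: s0] c *
     (K0 + K1 * \sum_(i < nI) (Gam (s0 :: c) i - gam0 i)) =
   K0 * \sum_(c : T.-tuple S) cprob pi [:: s0] c + K1 *
   (\sum_(c : T.-tuple S) cprob pi [:: s0] c * \sum_(i < nI) Gam (s0 :: c) i
    - (\sum_(c : T.-tuple S) cprob pi [:: s0] c) * \sum_(i < nI) gam0 i).
  rewrite mulr_suml -sumrB !mulr_sumr -big_split; apply: eq_bigr => c _ /=.
  by rewrite sumrB; ring.
rewrite (sum_cprob pi_sum) mulr1 mul1r (exp_weight_sum T s0 [::]) weight_at1.
by rewrite addrAC subrr add0r.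
Qed.

Lemma F_le_Lagr s0 : Lambda pi beta s0 lam ->
  F gam0 x0 s0 <= Lagr pi zeta r g gbar beta a lam gam0 x0 s0.
Proof.
move=> /cvg_discounted_exp_mult cvm.
set K0 := (1 + \sum_(i < nI) gam0 i) * `|Lc|.
set K1 := `|Lc| + Cg / (1 - beta).
set lagr_sum := series (fun t => beta ^+ t * exp_lagr_term s0 [::] t).
pose bound T := lagr_sum T + (geometric K0 beta T +
  K1 * (beta ^+ T * \sum_(t < T) exp_mult s0 t)).
have cvg_bound : bound @ \oo --> limn lagr_sum + (0 + K1 * 0).
  apply: cvgD; first exact: cvg_lagr_series.
  apply: cvgD; first by apply: cvg_geometric; rewrite ger0_norm ?ltW.
  apply: cvgMl_tmp; apply: discounted_cumsum_cvg0 => //; exact: exp_mult_ge0.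
rewrite LagrE -/lagr_sum -[limn lagr_sum](_ : limn bound = _); last first.
  by rewrite (cvg_lim _ cvg_bound) // mulr0 !addr0.
apply: limr_ge; first by apply/cvg_ex; exists (limn lagr_sum + (0 + K1 * 0)).
apply: nearW => T.
have -> : F gam0 x0 s0 = adjusted_value s0 [::].
  by rewrite /adjusted_value weight_at1 big1 ?subr0 // => i _; rewrite subrr mul0r.
apply: le_trans (adjusted_value_telescope T s0 [::]) _.
rewrite /bound /lagr_sum /series /= big_mkord lerD2l.
have -> : K0 * beta ^+ T + K1 * (beta ^+ T * \sum_(t < T) exp_mult s0 t) =
   beta ^+ T * (K0 + K1 * \sum_(t < T) exp_mult s0 t) by ring.
apply: ler_wpM2l; first by rewrite exprn_ge0 // ltW.
exact: exp_adjusted_value_bdd.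
Qed.

End Telescope.

Arguments F_le_Lagr {R S A X nI pi zeta r g gbar beta} pi_pos pi_sum beta_pos beta_lt1
  {x0 gam0 lam a F Cg} g_bdd Cg_ge0 greedy {Lc Cr} F_ub gam0_ge0 lam_ge0 r_bdd Cr_ge0 {s0}.

Theorem lemma3p7 (R : realType) (S A : finType) (X : Type) (nI : nat)
    (pi : S -> S -> R) (zeta : X -> A -> S -> X) (p r : X -> A -> S -> R)
    (g : 'I_nI -> X -> A -> S -> R) (gbar : 'I_nI -> R) (beta : R)
    (xe : nat -> X)
    (pi_pos : forall s s', 0 < pi s s')
    (pi_sum : forall s, \sum_(s' : S) pi s s' = 1)
    (beta_pos : 0 < beta) (beta_lt1 : beta < 1)
    (r_bdd : exists C : R, forall x a s, `|r x a s| <= C)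
    (g_bdd : forall i, exists C : R, forall x a s, `|g i x a s| <= C)
    (xe_onto : forall x : X, exists j, xe j = x)
    (standing : forall (x0 : X) (s0 : S),
        exists a, feasible pi zeta p g gbar beta x0 s0 a)
    (F : ('I_nI -> R) -> X -> S -> R)
    (FN : inN pi zeta p r g gbar beta xe F)
    (Ffix : forall gam x s, nonneg gam ->
        Bell pi zeta p r g gbar beta F gam x s = (F gam x s)%:E) :
  forall gam x s, nonneg gam ->
    ((F gam x s)%:E <= Dval pi zeta p r g gbar beta gam x s)%E.
Proof.
move=> gam x s gam_ge0.
have [Cr Cr_ge0 r_le] := norm_bound_ge0 r_bdd.
have [Cg Cg_ge0 g_le] := norm_bound_family g_bdd.
have F_ub G y s' : nonneg G -> F G y s' <= (1 + \sum_(i < nI) G i) * Lconst r g beta.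
  by case: FN => _ /(_ y s') [_ [_ [_]]]; apply.
have [a0 _] := standing x s.
apply: le_ereal_inf_tmp => _ [lam lam_in <-].
have lam_ge0 := proj1 lam_in.
pose a := greedy_plan zeta x gam lam (a0 [::])
  (bellman_action pi zeta p r g gbar beta F (a0 [::])).
have a_greedy s' w :
    0 <= p (xh zeta a x (s' :: w)) (a (s' :: w)) (last s' w) /\
    F (weight_at gam lam a (s' :: w)) (xh zeta a x (s' :: w)) (last s' w) <=
    bellman_obj pi zeta r g gbar beta F (xh zeta a x (s' :: w)) (last s' w)
      (weight_at gam lam a (s' :: w)) (mult_at lam a (s' :: w)) (a (s' :: w)).
  rewrite [a (s' :: w)]greedy_planE; apply: (bellman_actionP Ffix) => i.
  - exact: le_trans (gam_ge0 i) (weight_at_ge lam_ge0).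
  - exact: lam_ge0.
apply: (@le_trans _ _ (Lagr pi zeta r g gbar beta a lam gam x s)%:E).
  rewrite lee_fin; apply: (F_le_Lagr pi_pos pi_sum beta_pos beta_lt1 g_le Cg_ge0 _
    F_ub gam_ge0 lam_ge0 r_le Cr_ge0 lam_in).
  by move=> s' w; case: (a_greedy s' w).
by apply: ereal_sup_ubound; exists a => // s' w; case: (a_greedy s' w).
Qed.
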